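(* The detour sequence of every path-unicyclic graph is full.
   Context: All graphs are finite and simple. A path-unicyclic graph is a graph obtained from a cycle $C$ by attaching pairwise vertex-disjoint paths to some (at least one, possibly all) of the vertices of $C$, at most one path per vertex of $C$, where each attached path meets $C$ only in one of its endvertices (the attached path being joined to $C$ at that vertex). The order of a path is its number of vertices. For a vertex $v$, $\tau(v)$ is the order of a longest path in the graph having $v$ as an endvertex. The detour sequence is the nondecreasing sequence $d_1\le\cdots\le d_n$ of the values $\tau(v)$ over all vertices. It is full if every integer $k$ with $d_1\le k\le d_n$ occurs in it, equivalently $d_i-d_{i-1}\le 1$ for all $2\le i\le n$. *)

From mathcomp Require Import all_boot.
Set Implicit Arguments. Unset Strict Implicit. Unset Printing Implicit Defensive.

Definition has_path_from (T : finType) (e : rel T) (v : T) (n : nat) : bool :=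
  [exists t : n.-tuple T, path e v t && uniq (v :: t)].

(* tau e v: the order (number of vertices) of a longest path having v as
   an endvertex.  Such a path has at most #|T| vertices, so its number of
   edges n is < #|T|. *)
Definition tau (T : finType) (e : rel T) (v : T) : nat :=
  (\max_(n < #|T| | has_path_from e v n) (n : nat)).+1.

Definition detour_full (T : finType) (e : rel T) : Prop :=
  forall (u w : T) (k : nat), tau e u <= k <= tau e w -> exists v : T, tau e v = k.

(* Concrete path-unicyclic graph: cycle on 'I_m (m >= 3); at cycle vertex i
   a path with len i further vertices is attached.  Vertex (i, 0) is the
   cycle vertex i, vertex (i, j), 1 <= j <= len i, is the j-th vertex of the
   path attached at i (so (i,0),(i,1),...,(i,len i) is a path). *)
Definition pu_vertex (m : nat) (len : 'I_m -> nat) : finType :=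
  {i : 'I_m & 'I_(len i).+1}.

Definition cyc_adj (m : nat) (i j : 'I_m) : bool :=
  ((j : nat) == i.+1 %% m) || ((i : nat) == j.+1 %% m).

Definition pu_adj (m : nat) (len : 'I_m -> nat) : rel (pu_vertex len) :=
  fun x y =>
    if tag x == tag y then
      ((tagged x : nat).+1 == tagged y) || ((tagged y : nat).+1 == tagged x)
    else
      [&& (tagged x : nat) == 0, (tagged y : nat) == 0 & cyc_adj (tag x) (tag y)].

Definition path_unicyclic (T : finType) (e : rel T) : Prop :=
  exists (m : nat) (len : 'I_m -> nat) (f : T -> pu_vertex len),
    [/\ 3 <= m, (exists i : 'I_m, 0 < len i), bijective f &
        forall x y : T, e x y = pu_adj (f x) (f y)].

From mathcomp Require Import all_boot zify.
Set Implicit Arguments. Unset Strict Implicit. Unset Printing Implicit Defensive.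

(** Along an edge of an attached path, which is a bridge, [tau] changes by at
    most one.  If the cycle vertex [r] follows the cycle vertex [x], then
    [tau] at [r] is at most one more than [tau] at the tip of the path
    attached to [x]: a longest path from [r] can be rerouted to start at that
    tip, because [x] has only two neighbours on the cycle.  Every partition of
    the vertices is crossed by one of these unit steps, so walking from a
    vertex with [tau < k] to one with [tau >= k] hits [tau = k]. *)

Section Detour.

Variables (T : finType) (e : rel T).

Lemma size_path_lt_tau v s : path e v s -> uniq (v :: s) -> size s < tau e v.
Proof.
move=> p_s u_s; have size_lt : size s < #|T|.
  by have := max_card (mem (v :: s)); rewrite (card_uniqP u_s).
rewrite /tau ltnS (bigmax_sup (Ordinal size_lt)) //.
by apply/existsP; exists (in_tuple s); rewrite p_s u_s.
Qed.

Lemma longest_path_from v :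
  exists s, [/\ path e v s, uniq (v :: s) & (size s).+1 = tau e v].
Proof.
have T_gt0 : 0 < #|T| by apply/card_gt0P; exists v.
have path0 : has_path_from e v (Ordinal T_gt0) by apply/existsP; exists [tuple].
have [n /existsP[t /andP[p_t u_t]] n_max] :=
  @arg_maxnP _ _ (fun n : 'I_#|T| => has_path_from e v n) val path0.
exists t; split=> //; rewrite size_tuple /tau; congr _.+1; apply/eqP.
rewrite eqn_leq (bigmax_sup n) //=; first by apply/bigmax_leqP => i; apply: n_max.
by apply/existsP; exists t; rewrite p_t u_t.
Qed.

Lemma detour_full_from_steps (step : rel T) :
  (forall a b, step a b -> tau e b <= (tau e a).+1) ->
  (forall (L : pred T) u w, L u -> ~~ L w ->
     exists a b, [/\ step a b, L a & ~~ L b]) ->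
  detour_full e.
Proof.
move=> step_tau step_cut u w k /andP[u_le w_ge].
have [<-|u_ne] := eqVneq (tau e u) k; first by exists u.
have [||a [b [ab La Lb]]] := step_cut [pred v | tau e v < k] u w.
- by rewrite inE ltn_neqAle u_ne u_le.
- by rewrite inE -leqNgt.
exists b; move: (step_tau a b ab) La Lb; rewrite !inE; lia.
Qed.

End Detour.

Lemma tau_iso (T T' : finType) (e : rel T) (e' : rel T') (f : T -> T') :
  bijective f -> (forall x y, e x y = e' (f x) (f y)) ->
  forall v, tau e v = tau e' (f v).
Proof.
move=> [g fK gK] f_adj v; have f_inj := can_inj fK; have g_inj := can_inj gK.
apply/eqP; rewrite eqn_leq; apply/andP; split.
- have [s [p_s u_s <-]] := longest_path_from e v.
  rewrite -(size_map f) size_path_lt_tau //; last by rewrite -map_cons map_inj_uniq.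
  by rewrite path_map; apply: sub_path p_s => x y; rewrite /= f_adj.
- have [s [p_s u_s <-]] := longest_path_from e' (f v).
  rewrite -(size_map g) size_path_lt_tau //; last first.
    by rewrite -{1}(fK v) -map_cons map_inj_uniq.
  rewrite -{1}(fK v) path_map; apply: sub_path p_s => x y /=.
  by rewrite f_adj !gK.
Qed.

Lemma detour_full_iso (T T' : finType) (e : rel T) (e' : rel T') (f : T -> T') :
  bijective f -> (forall x y, e x y = e' (f x) (f y)) ->
  detour_full e' -> detour_full e.
Proof.
move=> f_bij f_adj full' u w k; rewrite !(tau_iso f_bij f_adj) => /full'[v tau_v].
have [g _ gK] := f_bij; exists (g v).
by rewrite (tau_iso f_bij f_adj) gK.
Qed.

Section SymmetricGraph.

Variables (T : finType) (e : rel T).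
Hypothesis e_sym : symmetric e.

Lemma rev_path_sym x p : path e (last x p) (rev (belast x p)) = path e x p.
Proof. by rewrite rev_path; apply: eq_path => a b; apply: e_sym. Qed.

Lemma path_cut_const (C : pred T) c :
  (forall a b, e a b -> C a -> ~~ C b -> b = c) ->
  forall a s, path e a s -> c \notin a :: s -> {in a :: s, forall z, C z = C a}.
Proof.
move=> C_cut a s; elim: s a => [|b s IHs] a /=; first by move=> _ _ z /predU1P[->|].
move=> /andP[ab p_s]; rewrite inE negb_or => /andP[c_a c_bs] z.
have Cb : C b = C a.
  apply/idP/idP => [Cb | Ca]; apply/contraT => nC.
  - by move: c_a; rewrite (C_cut b a) ?eqxx // e_sym.
  - by move: c_bs; rewrite (C_cut a b) ?mem_head.
by rewrite inE => /predU1P[-> // | zbs]; rewrite -Cb; apply: IHs.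
Qed.

Lemma tau_bridge_le (C : pred T) x y :
  (forall a b, e a b -> C a -> ~~ C b -> a = x /\ b = y) ->
  e x y -> C x -> ~~ C y -> tau e x <= (tau e y).+1.
Proof.
move=> C_cut xy Cx nCy; have [s [p_s u_s <-]] := longest_path_from e x.
have [ys|nys] := boolP (y \in s); last first.
  have y_nxs : y \notin x :: s.
    by rewrite inE negb_or nys andbT; apply: contraNneq nCy => ->.
  suff : size (x :: s) < tau e y by rewrite /=; lia.
  by apply: size_path_lt_tau; rewrite ?cons_uniq ?y_nxs //= e_sym xy.
case: s p_s u_s ys => [|b s] //= /andP[xb p_s] /andP[x_nbs u_s] ys.
have [<-|b_ny] := eqVneq b y; first by rewrite ltnS size_path_lt_tau.
have Cb : C b.
  by apply: contraT => nCb; move: b_ny; case: (C_cut x b xb Cx nCb) => _ ->; rewrite eqxx.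
have out_cut a a' : e a a' -> ~~ C a -> ~~ ~~ C a' -> a' = x.
  by rewrite e_sym negbK => aa' nCa Ca'; case: (C_cut a' a aa' Ca' nCa).
by move: (path_cut_const (C := predC C) out_cut p_s x_nbs ys); rewrite /= nCy Cb.
Qed.

Lemma tau_bridge (C : pred T) x y :
  (forall a b, e a b -> C a -> ~~ C b -> a = x /\ b = y) ->
  e x y -> C x -> ~~ C y ->
  tau e x <= (tau e y).+1 /\ tau e y <= (tau e x).+1.
Proof.
move=> C_cut xy Cx nCy; split; first exact: tau_bridge_le C_cut xy Cx nCy.
apply: (tau_bridge_le (C := predC C)); rewrite /= ?negbK // 1?e_sym //.
by move=> a b ab nCa /negbNE Cb; rewrite e_sym in ab; case: (C_cut b a ab Cb nCa).
Qed.

Section HangingPath.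

Variables (C : pred T) (x0 tip : T) (arm : seq T).
Hypotheses (C_cut : forall a b, e a b -> C a -> ~~ C b -> b = x0)
  (arm_path : path e tip arm) (arm_last : last tip arm = x0)
  (arm_uniq : uniq (tip :: arm)) (arm_mem : tip :: arm =i [predU1 x0 & C])
  (x0_deg : #|[pred y | e x0 y && ~~ C y]| <= 2).

Lemma size_inside_le_arm s :
  uniq s -> x0 \notin s -> {subset s <= C} -> size s <= size arm.
Proof.
move=> u_s x0_ns s_C; rewrite -ltnS -[_.+1]/(size (x0 :: s)) -[_.+1]/(size (tip :: arm)).
apply: uniq_leq_size; first by rewrite cons_uniq x0_ns.
move=> z; rewrite arm_mem !inE => /predU1P[-> | /s_C Cz]; apply/predU1P.
  by left.
by right.
Qed.

Lemma size_outer_neighbours_le2 s :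
  uniq s -> {subset s <= [pred y | e x0 y && ~~ C y]} -> size s <= 2.
Proof.
move=> u_s s_out; rewrite -(card_uniqP u_s).
by rewrite (leq_trans (subset_leq_card _) x0_deg) //; apply/subsetP.
Qed.

Lemma tau_tip_extend q :
  path e x0 q -> uniq (x0 :: q) -> {in q, forall z, ~~ C z} ->
  size arm + size q < tau e tip.
Proof.
move=> p_q u_q out_q; rewrite -size_cat size_path_lt_tau //.
  by rewrite cat_path arm_path arm_last.
move: u_q; rewrite -cat_cons cat_uniq arm_uniq cons_uniq => /andP[x0_nq ->].
rewrite andbT; apply/hasPn => z zq; rewrite /= arm_mem !inE negb_or out_q // andbT.
by apply: contraNneq x0_nq => <-.
Qed.

Lemma tau_path_through_x0 r s1 s2 :
  e x0 r -> ~~ C r -> path e r (s1 ++ x0 :: s2) -> uniq (r :: s1 ++ x0 :: s2) ->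
  size (s1 ++ x0 :: s2) < (tau e tip).+1.
Proof.
move=> x0r nCr p_s; rewrite -cat_cons cat_uniq => /and3P[u_rs1 /hasPn rs1_ns2].
rewrite cons_uniq => /andP[x0_ns2 u_s2].
move: p_s; rewrite cat_path => /andP[p_s1 /= /andP[s1x0 p_s2]].
have x0_nrs1 : x0 \notin r :: s1 by apply: rs1_ns2; rewrite mem_head.
have out_rs1 : {in r :: s1, forall z, ~~ C z}.
  by move=> z /(path_cut_const C_cut p_s1 x0_nrs1) ->.
(* Either the path enters [C] right after [x0], and the arm followed by the
   reversed prefix is at least as long, or it leaves [x0] outside [C], which
   forces [s1 = [::]] as [x0] has at most two neighbours outside [C]. *)
have [in_s2 | ] := boolP (all C s2).
  have /size_inside_le_arm le_s2 : {subset s2 <= C} by apply/allP.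
  suff : size arm + size (rev (r :: s1)) < tau e tip.
    move: (le_s2 u_s2 x0_ns2); rewrite size_rev size_cat /= => le ext.
    by rewrite ltnS (leq_trans _ (ltnW ext)) // !addnS ltnS [X in X <= _]addnC leq_add2r.
  apply: tau_tip_extend; last by move=> z; rewrite mem_rev; apply: out_rs1.
    by rewrite -(last_rcons r s1 x0) -(belast_rcons r s1 x0) rev_path_sym rcons_path p_s1.
  by rewrite cons_uniq mem_rev rev_uniq x0_nrs1.
case: s2 => [|y s2] in p_s2 rs1_ns2 x0_ns2 u_s2 * => //.
have /andP[x0y p_ys2] := p_s2.
have side_ys2 := path_cut_const C_cut p_ys2 x0_ns2.
have [Cy|nCy] := boolP (C y).
  by move=> /allPn[z /side_ys2]; rewrite Cy => ->.
move=> _; case: s1 => [|a s1] in p_s1 s1x0 u_rs1 rs1_ns2 x0_nrs1 out_rs1 *.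
  suff ext : size arm + size (y :: s2) < tau e tip.
    by rewrite /= ltnS (leq_trans _ ext) // ltnS leq_addl.
  by apply: tau_tip_extend; rewrite ?cons_uniq ?x0_ns2 // => z /side_ys2 ->.
set z := last a s1; have z_in : z \in a :: s1 := mem_last a s1.
have r_nas1 : r \notin a :: s1 by move: u_rs1; rewrite cons_uniq => /andP[].
have : y \notin r :: a :: s1 by apply: rs1_ns2; rewrite !inE eqxx orbT.
rewrite inE negb_or => /andP[y_nr y_nas1].
suff : size [:: r; z; y] <= 2 by [].
apply: size_outer_neighbours_le2.
  rewrite /= !inE negb_or (eq_sym r y) y_nr andbT /=; apply/and3P; split=> //.
  - by apply: contraNneq r_nas1 => ->.
  - by apply: contraNneq y_nas1 => <-.
move=> v; rewrite !inE => /or3P[] /eqP->; rewrite ?x0r ?nCr ?x0y ?nCy //.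
by rewrite e_sym s1x0 out_rs1 // inE z_in orbT.
Qed.

Lemma tau_neighbour_le_tip r :
  e x0 r -> r != x0 -> ~~ C r -> tau e r <= (tau e tip).+1.
Proof.
move=> x0r r_nx0 nCr; have [s [p_s u_s <-]] := longest_path_from e r.
have [x0s|x0_ns] := boolP (x0 \in s).
  by case/splitPr: x0s p_s u_s => s1 s2; apply: tau_path_through_x0.
have x0_nrs : x0 \notin r :: s by rewrite inE negb_or eq_sym r_nx0.
suff : size arm + size (r :: s) < tau e tip by rewrite /=; lia.
apply: tau_tip_extend; [by rewrite /= x0r | by rewrite cons_uniq x0_nrs |].
by move=> z /(path_cut_const C_cut p_s x0_nrs) ->.
Qed.

End HangingPath.

End SymmetricGraph.

Lemma nat_cut (h : pred nat) a b :
  a <= b -> h a -> ~~ h b -> exists2 j, a <= j < b & h j && ~~ h j.+1.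
Proof.
move=> /subnKC <-; elim: (b - a) => [|n IHn] ha; first by rewrite addn0 ha.
rewrite addnS => nhSn; have [hn|nhn] := boolP (h (a + n)).
  by exists (a + n); rewrite ?hn ?nhSn // leq_addr ltnSn.
by case: (IHn ha nhn) => j /andP[aj jn] hj; exists j; rewrite // aj ltnS ltnW.
Qed.

Lemma ordS_cut m (h : pred 'I_m) x y :
  h x -> ~~ h y -> exists2 i, h i & ~~ h (ordS i).
Proof.
have m_gt0 : 0 < m by case: m x {h y} => [[]|].
pose o n : 'I_m := Ordinal (ltn_pmod n m_gt0).
have oS n : ordS (o n) = o n.+1.
  by apply: val_inj; rewrite /= -addn1 modnDml addn1.
have o_x : o x = x by apply: val_inj; rewrite /= modn_small.
have o_y : o (x + (y + m - x)) = y.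
  apply: val_inj; rewrite /= addnC subnK ?modnDr ?modn_small //.
  by rewrite (leq_trans (ltnW (ltn_ord x))) ?leq_addl.
move=> hx hy; have [|||j _ /andP[hj nhj]] := @nat_cut (h \o o) x (x + (y + m - x)).
- exact: leq_addr.
- by rewrite /= o_x.
- by rewrite /= o_y.
by exists (o j); rewrite // oS.
Qed.

Lemma rev_iotaS n : rev (iota 0 n.+1) = n :: rev (iota 0 n).
Proof. by rewrite -addn1 iotaD rev_cat. Qed.

Section PathUnicyclicGraph.

Variables (m : nat) (len : 'I_m -> nat).
Local Notation V := (pu_vertex len).
Local Notation adj := (@pu_adj m len).

Definition pu_at (i : 'I_m) (j : nat) : V :=
  @Tagged _ i (fun i => 'I_(len i).+1) (inord j).

Lemma pu_vertex_eq (u v : V) :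
  tag u = tag v -> tagged u = tagged v :> nat -> u = v.
Proof. by case: u v => [i j] [i' j'] /= ii'; subst i' => /val_inj->. Qed.

Lemma tagged_pu_at i j : j <= len i -> tagged (pu_at i j) = j :> nat.
Proof. by move=> j_le; rewrite /= inordK. Qed.

Lemma pu_atK (v : V) : pu_at (tag v) (tagged v) = v.
Proof. by apply: pu_vertex_eq; rewrite // tagged_pu_at // -ltnS. Qed.

Lemma cyc_adjE (i j : 'I_m) : cyc_adj i j = (j == ordS i) || (i == ordS j).
Proof. by []. Qed.

Lemma pu_adj_sym : symmetric adj.
Proof.
move=> x y; rewrite /pu_adj eq_sym; case: eqP => _; first exact: orbC.
by rewrite andbCA /cyc_adj orbC.
Qed.

Lemma pu_adj_same (a b : V) :
  tag a = tag b ->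
  adj a b = ((tagged a).+1 == tagged b :> nat) || ((tagged b).+1 == tagged a :> nat).
Proof. by move=> /eqP ab; rewrite /pu_adj ab. Qed.

Lemma pu_adj_tag (a b : V) : 0 < tagged a -> adj a b -> tag a = tag b.
Proof. by move=> a_pos; rewrite /pu_adj eqn0Ngt a_pos /=; case: eqP. Qed.

Lemma tau_arm_step (v w : V) :
  tag v = tag w -> tagged w = (tagged v).+1 :> nat ->
  tau adj v <= (tau adj w).+1 /\ tau adj w <= (tau adj v).+1.
Proof.
move=> vw wv; set C := [pred z : V | (tag z == tag v) && (tagged v < tagged z)].
have [] // := tau_bridge pu_adj_sym (C := C) (x := w) (y := v).
- move=> a b ab /andP[/eqP av va] nCb.
  have ab_tag := pu_adj_tag (leq_ltn_trans (leq0n _) va) ab.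
  have bv_tag : tag b == tag v by rewrite -ab_tag av.
  move: ab nCb; rewrite pu_adj_same // inE bv_tag /= -leqNgt => ab bv.
  have [a_w b_v] : tagged a = tagged w :> nat /\ tagged b = tagged v :> nat.
    move: ab; rewrite wv => /orP[/eqP ab | /eqP ba].
      by have := leq_ltn_trans bv va; rewrite -ab ltnNge leqnSn.
    have b_v : tagged b = tagged v :> nat by apply/eqP; rewrite eqn_leq bv -ltnS ba.
    by rewrite -ba b_v.
  by split; apply: pu_vertex_eq; rewrite ?av //; apply/eqP.
- by rewrite pu_adj_same // wv eqxx orbT.
- by rewrite inE wv ltnSn andbT eq_sym; apply/eqP.
- by rewrite inE ltnn andbF.
Qed.

Definition pu_arm (i : 'I_m) (n : nat) : seq V :=
  [seq pu_at i j | j <- rev (iota 0 n)].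

Definition pu_interior (i : 'I_m) : {pred V} :=
  [pred z : V | (tag z == i) && (0 < tagged z)].

Lemma pu_armS i n : pu_arm i n.+1 = pu_at i n :: pu_arm i n.
Proof. by rewrite /pu_arm rev_iotaS. Qed.

Section Arm.

Variable x : 'I_m.

Lemma pu_arm_path n : n <= len x -> path adj (pu_at x n) (pu_arm x n).
Proof.
elim: n => // n IHn lt_n; rewrite pu_armS /= IHn ?(ltnW lt_n) // andbT.
by rewrite pu_adj_same // !tagged_pu_at ?(ltnW lt_n) // eqxx orbT.
Qed.

Lemma pu_arm_last n : last (pu_at x n) (pu_arm x n) = pu_at x 0.
Proof. by elim: n => // n IHn; rewrite pu_armS. Qed.

Lemma pu_arm_uniq : uniq (pu_at x (len x) :: pu_arm x (len x)).
Proof.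
rewrite -pu_armS map_inj_in_uniq ?rev_uniq ?iota_uniq // => i j.
rewrite !mem_rev !mem_iota !add0n !ltnS => /andP[_ i_le] /andP[_ j_le] eq_ij.
by rewrite -(tagged_pu_at i_le) eq_ij tagged_pu_at.
Qed.

Lemma pu_arm_mem :
  pu_at x (len x) :: pu_arm x (len x) =i [predU1 pu_at x 0 & pu_interior x].
Proof.
move=> z; rewrite -pu_armS !inE; apply/mapP/predU1P => [[j] | [->|/andP[/eqP zx z_pos]]].
- rewrite mem_rev mem_iota add0n ltnS => /andP[_ j_le] ->.
  have [-> | j_pos] := posnP j; [left | right] => //.
  by rewrite /= eqxx tagged_pu_at.
- by exists 0; rewrite // mem_rev mem_iota.
- exists (tagged z : nat); last by rewrite -zx pu_atK.
  by rewrite mem_rev mem_iota add0n leq0n -zx /=.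
Qed.

End Arm.

Lemma tau_tip_base (x r : 'I_m) :
  r != x -> cyc_adj x r -> tau adj (pu_at r 0) <= (tau adj (pu_at x (len x))).+1.
Proof.
move=> r_nx xr; have x_nr : x != r by rewrite eq_sym.
apply: (tau_neighbour_le_tip pu_adj_sym _ (pu_arm_path (leqnn _)) (pu_arm_last _ _) (pu_arm_uniq x)
  (pu_arm_mem x)).
- move=> a b ab /andP[/eqP ax a_pos] nCb.
  have ab_tag := pu_adj_tag a_pos ab.
  have bx : tag b == x by rewrite -ab_tag ax.
  apply: pu_vertex_eq; rewrite ?tagged_pu_at //; first exact/eqP.
  by apply/eqP; move: nCb; rewrite /pu_interior inE bx /= lt0n negbK.
- apply: leq_trans (_ : #|[set pu_at (ordS x) 0; pu_at (ord_pred x) 0]| <= 2); last first.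
    by rewrite cards2; case: (_ != _).
  apply/subset_leq_card/subsetP => y; rewrite !inE => /andP[x0y nCy].
  have x_ny : x != tag y.
    apply: contraNneq nCy => xy; rewrite /pu_interior inE xy eqxx /=.
    by move: x0y; rewrite pu_adj_same // tagged_pu_at // => /orP[/eqP <-|].
  move: x0y; rewrite /pu_adj /= (negbTE x_ny) tagged_pu_at // => /and3P[_ /eqP y0 xy].
  have -> : y = pu_at (tag y) 0 by rewrite -{1}(pu_atK y) y0.
  move: xy; rewrite cyc_adjE => /orP[/eqP-> | /eqP x_Sy]; first by rewrite eqxx.
  by rewrite x_Sy ordSK eqxx orbT.
- by rewrite /pu_adj /= (negbTE x_nr) !tagged_pu_at.
- by apply: contraNneq r_nx => /(congr1 tag) /= ->.
- by rewrite /pu_interior inE /= (negbTE r_nx).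
Qed.

Definition pu_step : rel V := fun a b =>
  ((tag a == tag b) && adj a b)
  || [&& tag b == ordS (tag a), tag b != tag a,
         tagged a == len (tag a) :> nat & tagged b == 0 :> nat].

Lemma tau_pu_step a b : pu_step a b -> tau adj b <= (tau adj a).+1.
Proof.
case/orP => [/andP[/eqP ab] | /and4P[/eqP b_Sa b_na /eqP a_tip /eqP b0]].
  rewrite pu_adj_same // => /orP[] /eqP ab_tagged.
  - by case: (tau_arm_step ab (esym ab_tagged)).
  - by case: (tau_arm_step (esym ab) (esym ab_tagged)).
rewrite -(pu_atK a) -(pu_atK b) a_tip b0; apply: tau_tip_base => //.
by rewrite cyc_adjE b_Sa eqxx.
Qed.

Lemma pu_arm_step i j :
  j < len i -> pu_step (pu_at i j) (pu_at i j.+1) /\ pu_step (pu_at i j.+1) (pu_at i j).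
Proof.
move=> j_lt; rewrite /pu_step /= eqxx !pu_adj_same // !tagged_pu_at ?(ltnW j_lt) //.
by rewrite eqxx orbT.
Qed.

Lemma pu_arm_cut (L : pred V) a b :
  L a -> ~~ L b -> tag a = tag b -> exists u v, [/\ pu_step u v, L u & ~~ L v].
Proof.
move=> La nLb ab; set i := tag a.
have [La' nLb'] : L (pu_at i (tagged a)) /\ ~~ L (pu_at i (tagged b)).
  by rewrite pu_atK /i ab pu_atK.
have b_le : tagged b <= len i by rewrite /i ab -ltnS.
have a_le : tagged a <= len i by rewrite -ltnS.
have [ab_le | ba_lt] := leqP (tagged a) (tagged b).
  have [j /andP[_ jb] /andP[Lj nLj]] :=
    nat_cut (h := fun j => L (pu_at i j)) ab_le La' nLb'.
  have [st _] := pu_arm_step (leq_trans jb b_le).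
  by exists (pu_at i j), (pu_at i j.+1).
have nnLa : ~~ ~~ L (pu_at i (tagged a)) by rewrite negbK.
have [j /andP[_ ja] /andP[nLj /negbNE Lj]] :=
  nat_cut (h := fun j => ~~ L (pu_at i j)) (ltnW ba_lt) nLb' nnLa.
have [_ st] := pu_arm_step (leq_trans ja a_le).
by exists (pu_at i j.+1), (pu_at i j).
Qed.

Lemma pu_step_cut (L : pred V) u w :
  L u -> ~~ L w -> exists a b, [/\ pu_step a b, L a & ~~ L b].
Proof.
move=> Lu nLw; pose tip i := pu_at i (len i).
have [Lu_tip|nLu_tip] := boolP (L (tip (tag u)));
  last exact: (pu_arm_cut (L := L) Lu nLu_tip erefl).
have [Lw_tip|nLw_tip] := boolP (L (tip (tag w)));
  first exact: (pu_arm_cut (L := L) Lw_tip nLw erefl).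
have [x Lx nLSx] := ordS_cut (h := fun i => L (tip i)) Lu_tip nLw_tip.
have [LSx0|nLSx0] := boolP (L (pu_at (ordS x) 0));
  first exact: (pu_arm_cut (L := L) LSx0 nLSx erefl).
exists (tip x), (pu_at (ordS x) 0); split=> //; apply/orP; right.
rewrite /= eqxx !tagged_pu_at // !eqxx !andbT.
by apply: contraNneq nLSx => ->.
Qed.

Lemma pu_detour_full : detour_full adj.
Proof. exact: detour_full_from_steps tau_pu_step pu_step_cut. Qed.

End PathUnicyclicGraph.

Theorem theorem1p20 (T : finType) (e : rel T) :
  path_unicyclic e -> detour_full e.
Proof.
move=> [m [len [f [_ _ f_bij f_adj]]]].
exact: detour_full_iso f_bij f_adj (@pu_detour_full m len).
Qed.
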